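(* Let $m\geq1$, $I\subseteq\{1,\dots,m\}$, $A\subseteq F_I(\Gamma^m)$ a basic Presburger set, and $X=\widehat A$. Then for every face $B=F_J(A)$ of $A$, its socle satisfies $\widehat B=F_{\widehat J}(\widehat A)$, which is a face of $X$ (where $\widehat J=J\setminus\{m\}$). If moreover $A$ is non-negative, then conversely for every face $Y$ of $X$ there is a face $B$ of $A$ such that $\widehat B=Y$; in that case $B=Y\times\{+\infty\}$ if $m\notin\mathrm{Supp}\,B$, and $B=(Y\times\mathcal{Z})\cap\overline A$ if $m\in\mathrm{Supp}\,B$.
   Context: $\mathcal{Z}$ is a $\mathbb{Z}$-group (linearly ordered abelian group with smallest positive element $1$, $|\mathcal{Z}/n\mathcal{Z}|=n$ for all $n\geq1$), $\mathcal{Q}$ its divisible hull, $\Gamma=\mathcal{Z}\cup\{+\infty\}$, $\Omega=\mathcal{Q}\cup\{+\infty\}$. Topology on $\Omega$ generated by open intervals and $]a,+\infty]$; product topology on $\Omega^m$; $\overline A$ is closure in $\Omega^m$ (resp. $\Omega^{m-1}$). Non-negative: all coordinates $\geq0$. $\mathrm{Supp}\,a=\{i:a_i\neq+\infty\}$, $F_I(\Gamma^m)=\{a\in\Gamma^m:\mathrm{Supp}\,a=I\}$, $F_J(A)=\{a\in\overline A:\mathrm{Supp}\,a=J\}$, called a face of $A$ when non-empty; all points of a face $B$ have the same support $\mathrm{Supp}\,B$. Socle: $\widehat a=(a_1,\dots,a_{m-1})$, $\widehat A=\{\widehat a:a\in A\}$. A basic Presburger set $A\subseteq F_I(\Gamma^m)$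 is the set of $x\in F_I(\Gamma^m)$ satisfying finitely many conditions $\varphi_l(x)\geq\gamma_l$ and $\psi_l(x)\equiv\rho_l\,[n_l]$, with $\varphi_l,\psi_l:x\mapsto\sum_{i\in I}c_ix_i$, $c_i\in\mathbb{Z}$, $\gamma_l\in\mathcal{Z}$, $0\le\rho_l<n_l$ integers, and $a\equiv b\,[n]$ meaning $a-b\in n\mathcal{Z}$. *)

From mathcomp Require Import all_boot all_order all_algebra.
Set Implicit Arguments. Unset Strict Implicit. Unset Printing Implicit Defensive.
Import GRing.Theory.
Local Open Scope ring_scope.

Definition is_ordered_group (G : zmodType) (le : rel G) : Prop :=
  [/\ (forall x, le x x),
      (forall x y, le x y -> le y x -> x = y),
      (forall x y z, le x y -> le y z -> le x z),
      (forall x y, le x y \/ le y x) &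
      (forall x y z, le x y -> le (x + z) (y + z))].

Definition ltr_of (G : zmodType) (le : rel G) (x y : G) : Prop := le x y /\ x <> y.

Definition congr_mod (G : zmodType) (a b : G) (n : nat) : Prop :=
  exists k : G, a - b = k *+ n.

(* Z-group: linearly ordered abelian group with smallest positive element
   [one], and |Z / nZ| = n for all n >= 1 (there is a bijection between
   'I_n and Z/nZ, given by a complete system of n pairwise incongruent
   representatives). *)
Definition is_Zgroup (Z : zmodType) (le : rel Z) (one : Z) : Prop :=
  [/\ is_ordered_group le,
      ltr_of le 0 one,
      (forall x, ltr_of le 0 x -> le one x) &
      (forall n : nat, (0 < n)%N ->
         exists f : 'I_n -> Z,
           (forall i j, congr_mod (f i) (f j) n -> i = j) /\
           (forall x, exists i, congr_mod x (f i) n))].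

Definition is_divisible_hull (Z Q : zmodType) (leZ : rel Z) (leQ : rel Q)
  (iota : Z -> Q) : Prop :=
  [/\ is_ordered_group leQ,
      (forall x y, iota (x + y) = iota x + iota y) /\
      (forall x y, iota x = iota y -> x = y),
      (forall x y, leZ x y <-> leQ (iota x) (iota y)),
      (forall (q : Q) (n : nat), (0 < n)%N -> exists r : Q, r *+ n = q) &
      (forall q : Q, exists n : nat, (0 < n)%N /\ exists z : Z, q *+ n = iota z)].

(* Gamma = Z u {+oo} and Omega = Q u {+oo} are rendered as [option Z]   *)
(* and [option Q], with [None] = +oo.  Points of Gamma^m / Omega^m are   *)
(* functions 'I_m -> option _ ; coordinate m (last) is [ord_max].       *)

Definition supp (T : Type) (m : nat) (a : 'I_m -> option T) : {set 'I_m} :=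
  [set i | isSome (a i)].

Definition socle (T : Type) (m : nat) (a : 'I_m.+1 -> option T) : 'I_m -> option T :=
  fun i => a (widen_ord (leqnSn m) i).

Definition hat (T : Type) (m : nat) (S : ('I_m.+1 -> option T) -> Prop) :
  ('I_m -> option T) -> Prop :=
  fun y => exists x, S x /\ forall i, y i = socle x i.

Definition hatJ (m : nat) (J : {set 'I_m.+1}) : {set 'I_m} :=
  [set i | widen_ord (leqnSn m) i \in J].

Definition set_eq (U : Type) (S T : U -> Prop) : Prop := forall x, S x <-> T x.

(* The topology on Omega is generated by the open intervals ]a,b[ and   *)
(* the sets ]a,+oo]; a basis of neighbourhoods of a finite q is given   *)
(* by the ]a,b[ with a < q < b (a, b in Q), and of +oo by the ]a,+oo].  *)
(* A point x lies in the closure of S in the product topology iff every *)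
(* basic product neighbourhood of x meets S.                            *)

Definition closure_Om (Q : zmodType) (leQ : rel Q) (m : nat)
  (S : ('I_m -> option Q) -> Prop) (x : 'I_m -> option Q) : Prop :=
  forall a b : 'I_m -> Q,
    (forall i, match x i with
               | Some q => ltr_of leQ (a i) q /\ ltr_of leQ q (b i)
               | None => True end) ->
    exists y, S y /\
      (forall i, match x i with
                 | Some _ => exists q, y i = Some q /\
                              ltr_of leQ (a i) q /\ ltr_of leQ q (b i)
                 | None => match y i with
                           | Some q => ltr_of leQ (a i) q
                           | None => True end
                 end).

Definition embed (Z Q : Type) (iota : Z -> Q) (m : nat)
  (A : ('I_m -> option Z) -> Prop) : ('I_m -> option Q) -> Prop :=
  fun y => exists a, A a /\ forall i, y i = omap iota (a i).

Definition clos (Z Q : zmodType) (leQ : rel Q) (iota : Z -> Q) (m : nat)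
  (A : ('I_m -> option Z) -> Prop) : ('I_m -> option Q) -> Prop :=
  closure_Om leQ (embed iota A).

Definition Fface (Z Q : zmodType) (leQ : rel Q) (iota : Z -> Q) (m : nat)
  (J : {set 'I_m}) (A : ('I_m -> option Z) -> Prop) : ('I_m -> option Q) -> Prop :=
  fun x => clos leQ iota A x /\ supp x = J.

Definition linform (Z : zmodType) (m : nat) (I : {set 'I_m}) (c : 'I_m -> int)
  (x : 'I_m -> option Z) : Z :=
  \sum_(i in I) (odflt 0 (x i)) *~ c i.

Definition basic_presburger (Z : zmodType) (leZ : rel Z) (one : Z) (m : nat)
  (I : {set 'I_m}) (A : ('I_m -> option Z) -> Prop) : Prop :=
  exists (k : nat) (phi : 'I_k -> 'I_m -> int) (gam : 'I_k -> Z)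
         (l : nat) (psi : 'I_l -> 'I_m -> int) (rho n : 'I_l -> nat),
    (forall j, (0 < n j)%N /\ (rho j < n j)%N) /\
    forall x, A x <->
      [/\ supp x = I,
          (forall j, leZ (gam j) (linform I (phi j) x)) &
          (forall j, congr_mod (linform I (psi j) x) (one *+ rho j) (n j))].

Definition nonneg (Z : zmodType) (leZ : rel Z) (m : nat)
  (A : ('I_m -> option Z) -> Prop) : Prop :=
  forall a, A a -> forall i z, a i = Some z -> leZ 0 z.

(* A closure point of [A] in [Omega^m] has its finite coordinates in [Z] (which is
   discrete in [Q]) and is approached by points of [A] that agree with it there and
   tend to [+oo] on the other coordinates of [I]; the closure can thus be computed in
   [Gamma^m].  If [F_J(A)] is non-empty, Farkas' lemma (by Fourier-Motzkin
   elimination) applied to such approximating points yields an integer recession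
   direction [d] of [A] ([phi_l . d >= 0], [psi_l . d = 0 mod n_l]) with [d = 0] on
   [J] and [d >= 1] on [I \ J].  Translating any point of [A] far along [d] shows that
   its restriction to [J] lies in [F_J(A)]; as this does not involve the last
   coordinate, the socle of [F_J(A)] is [F_(J \ m)] of the socle.  Conversely, a face
   of the socle gives in the same way a direction vanishing on its support; when [A]
   is non-negative its last coordinate [d_m] is [>= 0], and the face of [A] above it
   contains [m] in its support exactly when [d_m = 0]. *)

From mathcomp Require Import all_boot all_order all_algebra.
From mathcomp Require Import ring lra zify.
From Stdlib Require Import FunctionalExtensionality.
Set Implicit Arguments. Unset Strict Implicit. Unset Printing Implicit Defensive.
Import Order.TTheory GRing.Theory Num.Theory.
Local Open Scope ring_scope.

(* A pair [(a, b) : ineq n] encodes the inequality [b <= a . d] on vectors [d : 'I_n -> R]. *)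
Definition ineq n := ({ffun 'I_n -> int} * int)%type.

Inductive cone n (s : seq (ineq n)) : {ffun 'I_n -> int} -> int -> Prop :=
| cone0 : cone s 0 0
| coneS a b a' b' : (a, b) \in s -> cone s a' b' -> cone s (a + a') (b + b').

Section Cone.
Variables (n : nat) (s : seq (ineq n)).

Lemma coneD a b a' b' : cone s a b -> cone s a' b' -> cone s (a + a') (b + b').
Proof.
elim=> [|a1 b1 a2 b2 H1 _ IH] H; first by rewrite !add0r.
by rewrite -!addrA; apply: coneS => //; apply: IH.
Qed.

Lemma cone_mem a b : (a, b) \in s -> cone s a b.
Proof. by move=> H; rewrite -(addr0 a) -(addr0 b); apply: coneS => //; apply: cone0. Qed.

Lemma coneMn a b k : cone s a b -> cone s (a *+ k) (b *+ k).
Proof.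
move=> H; elim: k => [|k IH]; first by rewrite !mulr0n; apply: cone0.
by rewrite !mulrS; apply: coneD.
Qed.

End Cone.

Lemma exists_between (R : realDomainType) (T : eqType) (P N : seq T) (L U : T -> R) :
  (forall p q, p \in P -> q \in N -> L p <= U q) ->
  exists x, (forall p, p \in P -> L p <= x) /\ (forall q, q \in N -> x <= U q).
Proof.
elim: P => [|p P IH] H.
  elim: N H => [|q N IH] H; first by exists 0.
  have [|x [_ Hx]] := IH; first by move=> p q'; rewrite in_nil.
  case: (leP x (U q)) => h.
    by exists x; split => // q'; rewrite inE => /orP [/eqP -> //|]; apply: Hx.
  exists (U q); split => // q'; rewrite inE => /orP [/eqP -> //|/Hx hx].
  exact: le_trans (ltW h) hx.
have [|x [Hx1 Hx2]] := IH; first by move=> p' q hp hq; apply: H => //; rewrite inE hp orbT.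
case: (leP (L p) x) => h.
  by exists x; split => // p'; rewrite inE => /orP [/eqP -> //|]; apply: Hx1.
exists (L p); split; last by move=> q hq; apply: H => //; rewrite inE eqxx.
by move=> p'; rewrite inE => /orP [/eqP -> //|/Hx1 hx]; apply: le_trans hx (ltW h).
Qed.

Lemma addr_mulrn_abs_opp (x y : int) : 0 < x -> y < 0 -> x *+ `|y| + y *+ `|x| = 0.
Proof.
move=> hx hy.
rewrite -(mulr_natr x) -(mulr_natr y) !natz (gez0_abs (ltW hx)) (ltz0_abs hy); ring.
Qed.

Section Farkas.
Variable R : realFieldType.

Definition rdot n (a : {ffun 'I_n -> int}) (d : 'I_n -> R) : R :=
  \sum_i (a i)%:~R * d i.

Definition solves n (s : seq (ineq n)) (d : 'I_n -> R) :=
  forall r, r \in s -> (r.2)%:~R <= rdot r.1 d.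

Lemma rdot0 n d : rdot (0 : {ffun 'I_n -> int}) d = 0.
Proof. by rewrite /rdot big1 // => i _; rewrite ffunE mul0r. Qed.

Lemma rdotD n (a b : {ffun 'I_n -> int}) d : rdot (a + b) d = rdot a d + rdot b d.
Proof. by rewrite /rdot -big_split; apply: eq_bigr => i _; rewrite ffunE intrD mulrDl. Qed.

Lemma rdotMn n (a : {ffun 'I_n -> int}) d k : rdot (a *+ k) d = rdot a d *+ k.
Proof. by elim: k => [|k IH]; rewrite ?mulr0n ?rdot0 // !mulrS rdotD IH. Qed.

Lemma ler_divn_of_comb (bp bq rp rq : R) (a b : nat) : (0 < a)%N -> (0 < b)%N ->
  bp *+ b + bq *+ a <= rp *+ b + rq *+ a -> (bp - rp) / a%:R <= (rq - bq) / b%:R.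
Proof.
move=> ha hb.
rewrite -(mulr_natr bp) -(mulr_natr bq) -(mulr_natr rp) -(mulr_natr rq).
have hA : (0 : R) < a%:R by rewrite ltr0n.
have hB : (0 : R) < b%:R by rewrite ltr0n.
move: hA hB; move: (a%:R : R) (b%:R : R) => A B hA hB h.
rewrite ler_pdivrMr // mulrAC ler_pdivlMr //; nra.
Qed.

Section FourierMotzkin.
Variable n : nat.
Implicit Types (s : seq (ineq n.+1)) (a : {ffun 'I_n.+1 -> int}).

Definition fhead a := a ord0.
Definition fbehead a : {ffun 'I_n -> int} := [ffun i => a (lift ord0 i)].
Definition fcons0 (a : {ffun 'I_n -> int}) : {ffun 'I_n.+1 -> int} :=
  [ffun i => if unlift ord0 i is Some j then a j else 0].

(* Positive multiples of [p] and [q] whose first coefficients cancel. *)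
Definition fm_comb (p q : ineq n.+1) : ineq n :=
  (fbehead (p.1 *+ `|fhead q.1| + q.1 *+ `|fhead p.1|),
   p.2 *+ `|fhead q.1| + q.2 *+ `|fhead p.1|).

Definition fm_elim s : seq (ineq n) :=
  [seq (fbehead r.1, r.2) | r <- s & fhead r.1 == 0] ++
  [seq fm_comb p q | p <- [seq r <- s | 0 < fhead r.1], q <- [seq r <- s | fhead r.1 < 0]].

Lemma fcons0_behead a : fhead a = 0 -> fcons0 (fbehead a) = a.
Proof.
move=> H; apply/ffunP => i; rewrite !ffunE; case: unliftP => [j ->|->]; by rewrite ?ffunE.
Qed.

Lemma fcons00 : fcons0 0 = 0.
Proof. by apply/ffunP => i; rewrite !ffunE; case: unliftP => // *; rewrite ffunE. Qed.

Lemma fcons0D (a b : {ffun 'I_n -> int}) : fcons0 (a + b) = fcons0 a + fcons0 b.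
Proof. by apply/ffunP => i; rewrite !ffunE; case: unliftP => [j _|_]; rewrite ?ffunE ?addr0. Qed.

Lemma fbeheadD a b : fbehead (a + b) = fbehead a + fbehead b.
Proof. by apply/ffunP => i; rewrite !ffunE. Qed.

Lemma fbeheadMn a k : fbehead (a *+ k) = fbehead a *+ k.
Proof. by apply/ffunP => i; rewrite ffunE !ffunMnE ffunE. Qed.

Lemma fm_elim_cone s r : r \in fm_elim s -> cone s (fcons0 r.1) r.2.
Proof.
rewrite mem_cat => /orP [/mapP [r0 + ->] | /allpairsP [[p q] [/= + + ->]]].
  rewrite mem_filter => /andP [/eqP H1 H2] /=; rewrite fcons0_behead //.
  by apply: cone_mem; case: r0 H1 H2.
rewrite !mem_filter => /andP [Hp ps] /andP [Hq qs] /=.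
rewrite fcons0_behead; last by rewrite /fhead ffunE !ffunMnE addr_mulrn_abs_opp.
by apply: coneD; apply: coneMn; apply: cone_mem; [case: p ps {Hp Hq} | case: q qs {Hp Hq}].
Qed.

Lemma cone_fcons0 s (s' : seq (ineq n)) (a : {ffun 'I_n -> int}) b :
  (forall r, r \in s' -> cone s (fcons0 r.1) r.2) -> cone s' a b -> cone s (fcons0 a) b.
Proof.
move=> H; elim=> [|a1 b1 a2 b2 h1 _ IH]; first by rewrite fcons00; apply: cone0.
by rewrite fcons0D; apply: coneD => //; apply: (H (a1, b1) h1).
Qed.

Definition vcons (x : R) (d : 'I_n -> R) : 'I_n.+1 -> R :=
  fun i => if unlift ord0 i is Some j then d j else x.

Lemma rdot_vcons a x d : rdot a (vcons x d) = (fhead a)%:~R * x + rdot (fbehead a) d.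
Proof.
rewrite /rdot big_ord_recl /vcons unlift_none; congr (_ + _).
by apply: eq_bigr => i _; rewrite liftK ffunE.
Qed.

(* The inequalities of [s] bound [x] below (positive head) or above (negative head);
   [fm_elim s] says exactly that every lower bound is below every upper bound. *)
Lemma fm_elim_solves s d : solves (fm_elim s) d -> exists x, solves s (vcons x d).
Proof.
move=> Hs.
pose L (r : ineq n.+1) := ((r.2)%:~R - rdot (fbehead r.1) d) / (`|fhead r.1|%:R : R).
pose U (r : ineq n.+1) := (rdot (fbehead r.1) d - (r.2)%:~R) / (`|fhead r.1|%:R : R).
have [|x [Hx1 Hx2]] := @exists_between _ _ [seq r <- s | 0 < fhead r.1]
                                            [seq r <- s | fhead r.1 < 0] L U.
  move=> p q Hp Hq.
  have : fm_comb p q \in fm_elim s.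
    by rewrite mem_cat; apply/orP; right; apply/allpairsP; exists (p, q).
  move/Hs; rewrite /= fbeheadD !fbeheadMn rdotD !rdotMn intrD !rmorphMn.
  move: Hp Hq; rewrite !mem_filter => /andP [Hp _] /andP [Hq _] h.
  apply: ler_divn_of_comb h; rewrite absz_gt0; [exact: lt0r_neq0 | exact: ltr0_neq0].
exists x => r rs; rewrite rdot_vcons.
case: (ltrgtP (fhead r.1) 0) => hc.
- have := Hx2 r; rewrite mem_filter hc rs => /(_ isT).
  rewrite /U ler_pdivlMr; last by rewrite ltr0n absz_gt0 (lt_eqF hc).
  rewrite natr_absz ltr0_norm // mulrNz.
  move: (rdot _ _) (fhead r.1)%:~R (r.2)%:~R => a b c h; nra.
- have := Hx1 r; rewrite mem_filter hc rs => /(_ isT).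
  rewrite /L ler_pdivrMr; last by rewrite ltr0n absz_gt0 (gt_eqF hc).
  rewrite natr_absz gtr0_norm //.
  move: (rdot _ _) (fhead r.1)%:~R (r.2)%:~R => a b c h; nra.
- rewrite hc mul0r add0r; apply: (Hs (fbehead r.1, r.2)).
  rewrite mem_cat; apply/orP; left; apply/mapP; exists r => //.
  by rewrite mem_filter hc eqxx.
Qed.

End FourierMotzkin.

Lemma farkas n (s : seq (ineq n)) :
  (exists d, solves s d) \/ (exists b, 0 < b /\ cone s 0 b).
Proof.
elim: n s => [|n IH] s.
  have [/hasP [r rs hr] | /hasPn hn] := boolP (has (fun r : ineq 0 => 0 < r.2) s).
    right; exists r.2; split => //.
    have -> : (0 : {ffun 'I_0 -> int}) = r.1 by apply/ffunP => -[].
    by apply: cone_mem; case: r rs hr.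
  left; exists (fun _ => 0) => r rs.
  by rewrite /rdot big_ord0 lerz0 leNgt; apply: hn.
have [[d /fm_elim_solves [x hx]] | [b [hb hc]]] := IH (fm_elim s).
  by left; exists (vcons x d).
right; exists b; split => //.
by rewrite -fcons00; apply: cone_fcons0 hc; apply: fm_elim_cone.
Qed.

End Farkas.

Section OrderedGroup.
Variables (G : zmodType) (le : rel G) (ogG : is_ordered_group le).
Local Notation lt := (ltr_of le).

Lemma og_lexx x : le x x. Proof. by case: ogG. Qed.
Lemma og_le_anti x y : le x y -> le y x -> x = y. Proof. by case: ogG => _ H *; apply: H. Qed.
Lemma og_le_trans x y z : le x y -> le y z -> le x z.
Proof. by case: ogG => _ _ H *; apply: (H x y z). Qed.
Lemma og_le_total x y : le x y \/ le y x. Proof. by case: ogG. Qed.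
Lemma og_lerD2r x y z : le x y -> le (x + z) (y + z). Proof. by case: ogG => _ _ _ _; apply. Qed.

Lemma og_lerD2l x y z : le x y -> le (z + x) (z + y).
Proof. by move/(og_lerD2r z); rewrite ![_ + z]addrC. Qed.

Lemma og_lerD x y z w : le x y -> le z w -> le (x + z) (y + w).
Proof. by move=> h1 h2; apply: og_le_trans (og_lerD2r z h1) (og_lerD2l y h2). Qed.

Lemma og_lerN2 x y : le x y -> le (- y) (- x).
Proof. by move/(og_lerD2r (- x - y)); rewrite addrA subrr add0r addrCA subrr addr0. Qed.

Lemma og_mulrn_ge0 x k : le 0 x -> le 0 (x *+ k).
Proof.
move=> h; elim: k => [|k IH]; first by rewrite mulr0n og_lexx.
by rewrite mulrS -(addr0 0); apply: og_lerD.
Qed.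

Lemma og_mulrz_ge0 x c : le 0 x -> 0 <= c -> le 0 (x *~ c).
Proof. by case: c => // k h _; apply: og_mulrn_ge0. Qed.

Lemma og_ler_peMz x c : le 0 x -> 1 <= c -> le x (x *~ c).
Proof.
case: c => // -[|k] h _ //.
by rewrite -pmulrn mulrS -{1}(addr0 x); apply: og_lerD2l; apply: og_mulrn_ge0.
Qed.

Lemma og_ler_neMz x c : le 0 x -> c <= -1 -> le (x *~ c) (- x).
Proof.
by move=> h hc; rewrite -(opprK c) mulrNz; apply: og_lerN2; apply: og_ler_peMz => //; lia.
Qed.

Lemma og_seq_ub (s : seq G) : exists t, forall x, x \in s -> le x t.
Proof.
elim: s => [|x s [t Ht]]; first by exists 0.
have [h|h] := og_le_total x t.
  by exists t => y; rewrite inE => /orP [/eqP -> //|]; apply: Ht.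
exists x => y; rewrite inE => /orP [/eqP ->|/Ht hy]; [exact: og_lexx | exact: og_le_trans hy h].
Qed.

Lemma og_ltNge x y : lt x y <-> ~ le y x.
Proof.
split => [[h1 h2] h3|h]; first by apply: h2; apply: og_le_anti.
have [h1|//] := og_le_total x y.
by split => // e; apply: h; rewrite e og_lexx.
Qed.

Lemma og_ltxx x : ~ lt x x. Proof. by case. Qed.
Lemma og_ltW x y : lt x y -> le x y. Proof. by case. Qed.

Lemma og_lt_le_trans x y z : lt x y -> le y z -> lt x z.
Proof. by move=> /og_ltNge h1 h2; apply/og_ltNge => h3; apply: h1; apply: og_le_trans h2 h3. Qed.

Lemma og_le_lt_trans x y z : le x y -> lt y z -> lt x z.
Proof. by move=> h1 /og_ltNge h2; apply/og_ltNge => h3; apply: h2; apply: og_le_trans h3 h1. Qed.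

Lemma og_lt_trans x y z : lt x y -> lt y z -> lt x z.
Proof. by move=> h1 h2; apply: og_lt_le_trans h1 (og_ltW h2). Qed.

Lemma og_ltrD2r x y z : lt x y -> lt (x + z) (y + z).
Proof. by move=> /og_ltNge h; apply/og_ltNge => /(og_lerD2r (- z)); rewrite !addrK. Qed.

Lemma og_ltrD x y z w : lt x y -> lt z w -> lt (x + z) (y + w).
Proof.
move=> h1 h2; apply: og_lt_le_trans (og_ltrD2r z h1) _.
by apply: og_lerD2l; apply: og_ltW.
Qed.

Lemma og_ltrN2 x y : lt x y -> lt (- y) (- x).
Proof. by move=> /og_ltNge h; apply/og_ltNge => /og_lerN2; rewrite !opprK. Qed.

Lemma og_ltr_subl x e : lt 0 e -> lt (x - e) x.
Proof. by move=> h; have := og_ltrD2r x (og_ltrN2 h); rewrite oppr0 add0r addrC. Qed.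

Lemma og_ltr_addl x e : lt 0 e -> lt x (x + e).
Proof. by move=> h; have := og_ltrD2r x h; rewrite add0r addrC. Qed.

End OrderedGroup.

Lemma supp_inP (T : Type) N (a : 'I_N -> option T) I i :
  supp a = I -> i \in I -> exists v, a i = Some v.
Proof. by move=> <-; rewrite inE; case: (a i) => // v _; exists v. Qed.

Lemma supp_outP (T : Type) N (a : 'I_N -> option T) I i :
  supp a = I -> i \notin I -> a i = None.
Proof. by move=> <-; rewrite inE; case: (a i). Qed.

Definition unit_form N (i : 'I_N) (v : int) : {ffun 'I_N -> int} :=
  [ffun i' => if i' == i then v else 0].

Lemma rdot_unit_form (R : realFieldType) N (i : 'I_N) v (d : 'I_N -> R) :
  rdot (unit_form i v) d = v%:~R * d i.
Proof.
rewrite /rdot (bigD1 i) //= big1 ?addr0; first by rewrite ffunE eqxx.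
by move=> i' /negbTE h; rewrite ffunE h mul0r.
Qed.

Lemma exists_int_multiple N (d : 'I_N -> rat) :
  exists2 c : rat, 1 <= c & exists D : 'I_N -> int, forall i, (D i)%:~R = c * d i.
Proof.
pose den : int := \prod_i denq (d i).
exists den%:~R.
  by rewrite ler1z -gtz0_ge1; apply: prodr_gt0 => i _; apply: denq_gt0.
exists (fun i => numq (d i) * \prod_(j | j != i) denq (d j)) => i.
rewrite /den (intrM _ (numq (d i))) numqE [in RHS](bigD1 i) //=.
by rewrite intrM; ring.
Qed.

Section Direction.
Variables (Z : zmodType) (le : rel Z) (ogZ : is_ordered_group le) (one : Z)
  (one_gt0 : ltr_of le 0 one).

Definition zdot N (a : {ffun 'I_N -> int}) (w : 'I_N -> Z) := \sum_i w i *~ a i.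

Lemma zdot0 N w : zdot (0 : {ffun 'I_N -> int}) w = 0.
Proof. by rewrite /zdot big1 // => i _; rewrite ffunE mulr0z. Qed.

Lemma zdotD N (a b : {ffun 'I_N -> int}) w : zdot (a + b) w = zdot a w + zdot b w.
Proof. by rewrite /zdot -big_split; apply: eq_bigr => i _; rewrite ffunE mulrzDr. Qed.

Lemma zdot_unit_form N (i : 'I_N) v w : zdot (unit_form i v) w = w i *~ v.
Proof.
rewrite /zdot (bigD1 i) //= big1 ?addr0; first by rewrite ffunE eqxx.
by move=> i' /negbTE h; rewrite ffunE h mulr0z.
Qed.

Definition asymp_valid N (Cond : Z -> ('I_N -> Z) -> Prop) (r : ineq N) :=
  exists G, forall t w, Cond t w -> le (G + t *~ r.2) (zdot r.1 w).

Lemma cone_asymp_valid N (s : seq (ineq N)) Cond a b :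
  (forall r, r \in s -> asymp_valid Cond r) -> cone s a b -> asymp_valid Cond (a, b).
Proof.
move=> H; elim=> [|a1 b1 a2 b2 h1 _ [G2 IH]].
  by exists 0 => t w _; rewrite zdot0 mulr0z addr0; apply: og_lexx.
have [G1 H1] := H _ h1; exists (G1 + G2) => t w C.
by rewrite zdotD mulrzDr addrACA; apply: og_lerD => //; [apply: (H1 t w C) | apply: IH].
Qed.

Lemma asymp_valid_gt0 N (Cond : Z -> ('I_N -> Z) -> Prop) b :
  (forall t, le 0 t -> exists w, Cond t w) -> 0 < b -> ~ asymp_valid Cond (0, b).
Proof.
move=> HC hb [G HG].
have [t Ht] := og_seq_ub ogZ [:: 0; - G + one].
have ht0 : le 0 t by apply: Ht; rewrite !inE eqxx.
have ht1 : le (- G + one) t by apply: Ht; rewrite !inE eqxx orbT.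
have [w /HG] := HC t ht0; rewrite zdot0 => h.
have htb : le t (t *~ b) by apply: og_ler_peMz => //; rewrite -gtz0_ge1.
have h1 : le one (G + t *~ b).
  by have := og_lerD2l ogZ G (og_le_trans ogZ ht1 htb); rewrite addrA subrr add0r.
by case: one_gt0 => h0 /(_ (og_le_anti ogZ h0 (og_le_trans ogZ h1 h))).
Qed.

Variables (N : nat) (I : {set 'I_N}) (k : nat) (phi : 'I_k -> 'I_N -> int) (gam : 'I_k -> Z)
  (A : ('I_N -> option Z) -> Prop)
  (HA : forall a, A a -> supp a = I /\ forall j, le (gam j) (linform I (phi j) a)).

Definition phi_ineq j : ineq N := ([ffun i => if i \in I then phi j i else 0], 0).

Lemma zdot_phi_ineq j w : zdot (phi_ineq j).1 w = \sum_(i in I) w i *~ phi j i.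
Proof.
rewrite /zdot [RHS]big_mkcond; apply: eq_bigr => i _.
by rewrite ffunE; case: ifP; rewrite ?mulr0z.
Qed.

Lemma rdot_phi_ineq (R : realFieldType) j (d : 'I_N -> R) :
  rdot (phi_ineq j).1 d = \sum_(i in I) (phi j i)%:~R * d i.
Proof.
rewrite /rdot [RHS]big_mkcond; apply: eq_bigr => i _.
by rewrite ffunE; case: ifP; rewrite ?mul0r.
Qed.

Variables (Fx F : {set 'I_N}) (c : 'I_N -> Z).
Hypothesis FFx : forall i, i \in F -> i \notin Fx.
Hypothesis unbounded_on_F : forall t, exists a, A a /\
  (forall i, i \in Fx -> a i = Some (c i)) /\
  (forall i, i \in F -> exists v, a i = Some v /\ le t v).

Definition direction_ineqs : seq (ineq N) :=
  [seq phi_ineq j | j <- enum 'I_k] ++ [seq (unit_form i 1, 0) | i <- enum Fx] ++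
  [seq (unit_form i (-1), 0) | i <- enum Fx] ++ [seq (unit_form i 1, 1) | i <- enum F].

Definition gam_shift j := gam j - \sum_(i in I | i \in Fx) c i *~ phi j i.

(* Points of [A], with their [Fx]-coordinates set to 0, whose [F]-coordinates are at least [t]. *)
Definition direction_family t (w : 'I_N -> Z) :=
  [/\ forall i, i \in Fx -> w i = 0, forall i, i \in F -> le t (w i)
    & forall j, le (gam_shift j) (zdot (phi_ineq j).1 w)].

Lemma direction_family_nonempty t : exists w, direction_family t w.
Proof.
have [a [Aa [Ha1 Ha2]]] := unbounded_on_F t.
pose w i := if i \in Fx then 0 else odflt 0 (a i).
exists w; split.
- by move=> i hi; rewrite /w hi.
- by move=> i hi; rewrite /w (negbTE (FFx hi)); have [v [-> hv]] := Ha2 i hi.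
move=> j; have := (HA Aa).2 j.
have -> : linform I (phi j) a = \sum_(i in I | i \in Fx) c i *~ phi j i + zdot (phi_ineq j).1 w.
  rewrite zdot_phi_ineq /linform (bigID (fun i => i \in Fx)) /=.
  rewrite [X in _ = _ + X](bigID (fun i => i \in Fx)) /= [X in _ = _ + (X + _)]big1; last first.
    by move=> i /andP [_ hi]; rewrite /w hi mul0rz.
  rewrite add0r; congr (_ + _); first by apply: eq_bigr => i /andP [_ hi]; rewrite Ha1.
  by apply: eq_bigr => i /andP [_ /negbTE hi]; rewrite /w hi.
move/(og_lerD2r ogZ (- \sum_(i in I | i \in Fx) c i *~ phi j i)).
by rewrite [_ + zdot _ _]addrC addrK.
Qed.

Lemma direction_ineqs_asymp_valid r : r \in direction_ineqs -> asymp_valid direction_family r.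
Proof.
rewrite !mem_cat => /or4P [] /mapP [i hi ->].
- by exists (gam_shift i) => t w [_ _ h]; rewrite mulr0z addr0.
- 1,2: exists 0 => t w [h _ _] /=.
  1,2: by rewrite mulr0z addr0 zdot_unit_form h ?mul0rz ?og_lexx // -mem_enum.
- by exists 0 => t w [_ h _] /=; rewrite add0r zdot_unit_form; apply: h; rewrite -mem_enum.
Qed.

(* Otherwise Farkas gives a nonnegative combination of [direction_ineqs] reading
   [0 >= b] with [b > 0]; along [direction_family] it bounds [t * b] from above. *)
Lemma real_direction (R : realFieldType) :
  exists d : 'I_N -> R, [/\ forall i, i \in Fx -> d i = 0, forall i, i \in F -> 1 <= d i
                        & forall j, 0 <= \sum_(i in I) (phi j i)%:~R * d i].
Proof.
have [[d Hd]|[b [hb hc]]] := @farkas R _ direction_ineqs; last first.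
  have /asymp_valid_gt0 [] // := cone_asymp_valid direction_ineqs_asymp_valid hc.
  by move=> t _; apply: direction_family_nonempty.
exists d; split.
- move=> i hi; have := Hd (unit_form i 1, 0); have := Hd (unit_form i (-1), 0).
  rewrite !mem_cat !map_f ?mem_enum ?orbT // => /(_ isT) /= h1 /(_ isT) /= h2.
  by move: h1 h2; rewrite !rdot_unit_form /=; lra.
- move=> i hi; have := Hd (unit_form i 1, 1).
  by rewrite !mem_cat !map_f ?mem_enum ?orbT // => /(_ isT) /=; rewrite rdot_unit_form /=; lra.
- move=> j; rewrite -rdot_phi_ineq; apply: (Hd (phi_ineq j)).
  by rewrite mem_cat map_f ?mem_enum.
Qed.

Lemma int_direction : exists d : 'I_N -> int, [/\ forall i, i \in Fx -> d i = 0,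
  forall i, i \in F -> 1 <= d i & forall j, 0 <= \sum_(i in I) d i * phi j i].
Proof.
have [d [h0 h1 hphi]] := real_direction rat.
have [c1 hc [D ED]] := exists_int_multiple d.
exists D; split.
- by move=> i hi; apply/eqP; rewrite -(@intr_eq0 rat) ED h0 // mulr0.
- by move=> i hi; rewrite -(@ler1z rat) ED; have := h1 i hi; nra.
move=> j; rewrite -(@ler0z rat) rmorph_sum /=.
have -> : \sum_(i in I) ((D i * phi j i)%:~R : rat) =
          c1 * \sum_(i in I) (phi j i)%:~R * d i.
  by rewrite mulr_sumr; apply: eq_bigr => i _; rewrite intrM ED; ring.
by apply: mulr_ge0 => //; apply: le_trans hc.
Qed.

End Direction.

Definition gclosure (Z : Type) (le : rel Z) N (S : ('I_N -> option Z) -> Prop)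
    (z : 'I_N -> option Z) :=
  forall t : Z, exists s, S s /\ forall i, match z i with
     | Some v => s i = Some v
     | None => if s i is Some w then le t w else True end.

Definition restrict (T : Type) N (J : {set 'I_N}) (a : 'I_N -> option T) : 'I_N -> option T :=
  fun i => if i \in J then a i else None.

Section ZGroup.
Variables (Z : zmodType) (le : rel Z) (one : Z) (HZ : is_Zgroup le one).

Lemma Zgroup_ordered : is_ordered_group le. Proof. by case: HZ. Qed.
Lemma Zgroup_one_gt0 : ltr_of le 0 one. Proof. by case: HZ. Qed.
Lemma Zgroup_one_min x : ltr_of le 0 x -> le one x. Proof. by case: HZ => _ _ H _; apply: H. Qed.

End ZGroup.

Section Recession.
Variables (Z : zmodType) (le : rel Z) (one : Z) (HZ : is_Zgroup le one).
Variables (N : nat) (I : {set 'I_N}) (A : ('I_N -> option Z) -> Prop)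
  (k : nat) (phi : 'I_k -> 'I_N -> int) (gam : 'I_k -> Z)
  (l : nat) (psi : 'I_l -> 'I_N -> int) (rho nn : 'I_l -> nat)
  (Hn : forall j, (0 < nn j)%N /\ (rho j < nn j)%N)
  (HAx : forall x, A x <-> [/\ supp x = I, (forall j, le (gam j) (linform I (phi j) x)) &
          (forall j, congr_mod (linform I (psi j) x) (one *+ rho j) (nn j))]).

Let ogZ := Zgroup_ordered HZ.

Definition recession (d : 'I_N -> int) :=
  (forall j, 0 <= \sum_(i in I) d i * phi j i) /\
  (forall j, exists e : int, \sum_(i in I) d i * psi j i = (nn j)%:Z * e).

Definition translate (a : 'I_N -> option Z) (T : Z) (d : 'I_N -> int) : 'I_N -> option Z :=
  fun i => omap (fun v => v + T *~ d i) (a i).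

Lemma supp_translate a T d : supp (translate a T d) = supp a.
Proof. by apply/setP => i; rewrite !inE /translate; case: (a i). Qed.

Lemma linform_translate c a T d : supp a = I ->
  linform I c (translate a T d) = linform I c a + T *~ (\sum_(i in I) d i * c i).
Proof.
move=> Hs; rewrite /linform mulrz_sumr -big_split; apply: eq_bigr => i hi.
by have [v hv] := supp_inP Hs hi; rewrite /translate hv /= mulrzDl mulrzA.
Qed.

Lemma recession_translate a T d : A a -> recession d -> le 0 T -> A (translate a T d).
Proof.
move=> /HAx [Hs H1 H2] [G1 G2] hT; apply/HAx; split.
- by rewrite supp_translate.
- move=> j; rewrite linform_translate // -[gam j]addr0.
  apply: og_lerD => //; exact: og_mulrz_ge0.
- move=> j; rewrite linform_translate //; have [z hz] := H2 j; have [e he] := G2 j.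
  exists (z + T *~ e); rewrite addrAC hz he mulrnDl; congr (_ + _).
  by rewrite pmulrn -mulrzA mulrC.
Qed.

(* Translating far along [d] pushes the coordinates off [J] to [+oo]. *)
Lemma gclosure_restrict a (J : {set 'I_N}) d : A a -> recession d -> J \subset I ->
  (forall i, i \in J -> d i = 0) -> (forall i, i \in I -> i \notin J -> 1 <= d i) ->
  gclosure le A (restrict J a).
Proof.
move=> Aa Gd JI H0 H1 t.
have Hs : supp a = I by case/HAx: Aa.
have [T HT] := og_seq_ub ogZ (0 :: [seq t - odflt 0 (a i) | i <- enum 'I_N]).
have T0 : le 0 T by apply: HT; rewrite inE eqxx.
exists (translate a T d); split; first exact: recession_translate.
move=> i; rewrite /restrict; case: ifP => hJ.
  have [v hv] := supp_inP Hs (subsetP JI i hJ).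
  by rewrite /translate hv /= H0 // mulr0z addr0.
rewrite /translate; case E: (a i) => [v|] //=.
have hI : i \in I by rewrite -Hs inE E.
have h : le (t - v) T.
  by apply: HT; rewrite inE; apply/orP; right; apply/mapP; exists i; rewrite ?mem_enum ?E.
have := og_lerD2l ogZ v (og_le_trans ogZ h (og_ler_peMz ogZ T0 (H1 i hI (negbT hJ)))).
by rewrite addrC subrK.
Qed.

Lemma recession_scale (D : 'I_N -> int) :
  (forall j, 0 <= \sum_(i in I) D i * phi j i) ->
  recession (fun i => D i * \prod_(j < l) (nn j)%:Z).
Proof.
move=> H; split => j.
  have -> : \sum_(i in I) D i * \prod_(j0 < l) (nn j0)%:Z * phi j i =
            \prod_(j0 < l) (nn j0)%:Z * \sum_(i in I) D i * phi j i.
    by rewrite mulr_sumr; apply: eq_bigr => i _; ring.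
  by apply: mulr_ge0 => //; apply: prodr_ge0.
exists ((\sum_(i in I) D i * psi j i) * \prod_(j' | j' != j) (nn j')%:Z).
by rewrite (bigD1 j) //= mulr_suml mulr_sumr; apply: eq_bigr => i _; ring.
Qed.

Lemma recession_direction (Fx F : {set 'I_N}) (c : 'I_N -> Z) :
  (forall i, i \in F -> i \notin Fx) ->
  (forall t, exists a, A a /\ (forall i, i \in Fx -> a i = Some (c i)) /\
                       (forall i, i \in F -> exists v, a i = Some v /\ le t v)) ->
  exists d, [/\ recession d, forall i, i \in Fx -> d i = 0 & forall i, i \in F -> 1 <= d i].
Proof.
move=> FFx HF.
have HA a : A a -> supp a = I /\ forall j, le (gam j) (linform I (phi j) a).
  by case/HAx.
have [D [h0 h1 hphi]] := int_direction ogZ (Zgroup_one_gt0 HZ) HA FFx HF.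
have Nge1 : 1 <= \prod_(j < l) (nn j)%:Z.
  by rewrite -gtz0_ge1; apply: prodr_gt0 => j _; have := (Hn j).1; lia.
exists (fun i => D i * \prod_(j < l) (nn j)%:Z); split.
- exact: recession_scale.
- by move=> i hi; rewrite h0 // mul0r.
- by move=> i /h1 hD; nia.
Qed.

(* A negative coordinate would make that coordinate of a far translate negative. *)
Lemma nonneg_recession_ge0 a d i : nonneg le A -> A a -> recession d -> i \in I -> 0 <= d i.
Proof.
move=> Hnn Aa Gd hi; rewrite leNgt; apply/negP => hd.
have [Hs _ _] := (HAx a).1 Aa.
have [v hv] := supp_inP Hs hi.
have one_gt0 := Zgroup_one_gt0 HZ.
have v0 : le 0 v by apply: (Hnn a Aa i).
have T0 : le 0 (v + one) by rewrite -[0]addr0; apply: og_lerD => //; case: one_gt0.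
have := Hnn _ (recession_translate Aa Gd T0) i (v + (v + one) *~ d i).
rewrite /translate hv => /(_ erefl) h.
have hd1 : d i <= -1 by lia.
have := og_lerD2l ogZ v (og_ler_neMz ogZ T0 hd1).
rewrite opprD addrA subrr add0r => h3.
have := og_lerN2 ogZ (og_le_trans ogZ h h3); rewrite opprK oppr0 => h4.
by case: one_gt0 => h5; apply; apply: og_le_anti h5 h4.
Qed.

End Recession.

Section Closure.
Variables (Z Q : zmodType) (leZ : rel Z) (leQ : rel Q) (iota : Z -> Q) (one : Z)
  (HZ : is_Zgroup leZ one) (HQ : is_divisible_hull leZ leQ iota).
Local Notation ltQ := (ltr_of leQ).

Let ogZ := Zgroup_ordered HZ.
Lemma hull_ordered : is_ordered_group leQ. Proof. by case: HQ. Qed.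
Let ogQ := hull_ordered.

Lemma iotaD x y : iota (x + y) = iota x + iota y. Proof. by case: HQ => _ []. Qed.
Lemma iota_inj : injective iota. Proof. by case: HQ => _ [_ H] *; apply: H. Qed.
Lemma iota_le x y : leZ x y <-> leQ (iota x) (iota y).
Proof. by case: HQ => _ _ H _ _; apply: H. Qed.

Lemma iota0 : iota 0 = 0.
Proof. by apply: (@addrI _ (iota 0)); rewrite -iotaD !addr0. Qed.

Lemma iotaN x : iota (- x) = - iota x.
Proof. by apply: (@addrI _ (iota x)); rewrite -iotaD !subrr iota0. Qed.

Lemma iotaB x y : iota (x - y) = iota x - iota y.
Proof. by rewrite iotaD iotaN. Qed.

Lemma iota_lt x y : ltQ (iota x) (iota y) <-> ltr_of leZ x y.
Proof.
split => [[h1 h2]|[h1 h2]]; split; [exact/iota_le | by move=> e; apply: h2; rewrite e |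
                                  exact/iota_le | by move/iota_inj].
Qed.

Lemma half_one : exists2 e, e + e = iota one & ltQ 0 e.
Proof.
case: HQ => _ _ _ H _; have [e he] := H (iota one) 2%N isT.
exists e; first by rewrite -he mulr2n.
apply/(og_ltNge ogQ) => h.
have := og_lerD ogQ h h; rewrite -mulr2n he addr0 -iota0 => /iota_le h2.
by case: (Zgroup_one_gt0 HZ) => h3; apply; apply: og_le_anti h3 h2.
Qed.

Lemma iota_cofinal q : exists t, leQ q (iota t).
Proof.
case: HQ => _ _ _ _ H; have [n [hn [z hz]]] := H q.
have [h|h] := og_le_total ogQ 0 q; last by exists 0; rewrite iota0.
exists z; rewrite -hz; case: n hn {hz} => // n _.
by rewrite mulrS -{1}(addr0 q); apply: (og_lerD2l ogQ q (og_mulrn_ge0 ogQ n h)).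
Qed.

Lemma iota_cofinal_seq (s : seq Q) : exists t, forall q, q \in s -> ltQ q (iota t).
Proof.
have [t Ht] : exists t, forall q, q \in s -> leQ q (iota t).
  elim: s => [|q s [t Ht]]; first by exists 0.
  have [t' Ht'] := iota_cofinal q; have [u Hu] := og_seq_ub ogZ [:: t; t'].
  exists u => q'; rewrite inE => /orP [/eqP ->|/Ht h].
    by apply: (og_le_trans ogQ Ht'); apply/iota_le; apply: Hu; rewrite !inE eqxx orbT.
  by apply: (og_le_trans ogQ h); apply/iota_le; apply: Hu; rewrite !inE eqxx.
exists (t + one) => q /Ht h; apply: (og_le_lt_trans ogQ h); apply/iota_lt.
by have := og_ltrD2r ogZ t (Zgroup_one_gt0 HZ); rewrite add0r addrC.
Qed.

(* [Z] is discrete in [Q]: an open interval of length [iota one] meets [iota Z] at most once. *)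
Lemma iota_eq_near q e w w' : e + e = iota one ->
  ltQ (q - e) (iota w) -> ltQ (iota w) (q + e) ->
  ltQ (q - e) (iota w') -> ltQ (iota w') (q + e) -> w = w'.
Proof.
move=> he h1 h2 h3 h4.
have E : (q + e) - (q - e) = e + e by rewrite opprB addrCA [q + e]addrC addrK.
have lt_one x y : ltQ (iota x) (q + e) -> ltQ (q - e) (iota y) -> ltr_of leZ (x - y) one.
  by move=> k1 k2; apply/iota_lt; rewrite iotaB -he -E; exact: (og_ltrD ogQ k1 (og_ltrN2 ogQ k2)).
have le_eq x y : ltr_of leZ (y - x) one -> leZ x y -> x = y.
  move=> hk hxy; case: (@eqP _ x y) => // nxy; exfalso.
  have : ltr_of leZ 0 (y - x) by have := og_ltrD2r ogZ (- x) (conj hxy nxy); rewrite subrr.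
  by move/(Zgroup_one_min HZ); move/(og_ltNge ogZ): hk.
have [hw|hw] := og_le_total ogZ w w'; first by apply: le_eq (lt_one _ _ h4 h1) hw.
by symmetry; apply: le_eq (lt_one _ _ h2 h3) hw.
Qed.

Definition adherent_iota q :=
  forall a b, ltQ a q -> ltQ q b -> exists w, ltQ a (iota w) /\ ltQ (iota w) b.

Lemma adherent_iotaP q : adherent_iota q -> exists w, q = iota w.
Proof.
move=> Hq; have [e he e0] := half_one.
have [w0 [h1 h2]] := Hq _ _ (og_ltr_subl ogQ q e0) (og_ltr_addl ogQ q e0).
case: (@eqP _ q (iota w0)) => [->|nq]; first by exists w0.
exfalso; have [hl|hl] := og_le_total ogQ q (iota w0).
- have [w1 [k1 k2]] := Hq (q - e) (iota w0) (og_ltr_subl ogQ q e0) (conj hl nq).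
  have ew := iota_eq_near he k1 (og_lt_trans ogQ k2 h2) h1 h2.
  by rewrite ew in k2; apply: og_ltxx k2.
- have [w1 [k1 k2]] := Hq (iota w0) (q + e) (conj hl (nesym nq)) (og_ltr_addl ogQ q e0).
  have ew := iota_eq_near he (og_lt_trans ogQ h1 k1) k2 h1 h2.
  by rewrite ew in k1; apply: og_ltxx k1.
Qed.

Section Points.
Variables (N : nat) (S : ('I_N -> option Z) -> Prop) (x : 'I_N -> option Q).
Hypothesis Sx : closure_Om leQ (embed iota S) x.

Lemma clos_coord_adherent i q : x i = Some q -> adherent_iota q.
Proof.
move=> hq a' b' ha hb; have [e _ e0] := half_one.
pose a j := if j == i then a' else odflt 0 (x j) - e.
pose b j := if j == i then b' else odflt 0 (x j) + e.
have [|y [[s [_ Hys]] Hy]] := @Sx a b.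
  move=> j; rewrite /a /b; case: eqP => [->|_]; first by rewrite hq.
  by case: (x j) => //= q'; split; [apply: og_ltr_subl | apply: og_ltr_addl].
have := Hy i; rewrite hq Hys /a /b eqxx.
by case: (s i) => [w|] /= [q0 [// [<-] hab]]; exists w.
Qed.

Lemma clos_box t : exists s, [/\ S s,
  forall i q, x i = Some q -> exists w, s i = Some w /\ q = iota w &
  forall i, x i = None -> if s i is Some w then is_true (leZ t w) else True].
Proof.
have [e he e0] := half_one.
pose a j := if x j is Some q then q - e else iota t.
pose b j := odflt 0 (x j) + e.
have [|y [[s [Ss Hys]] Hy]] := @Sx a b.
  move=> j; rewrite /a /b; case: (x j) => //= q.
  by split; [apply: og_ltr_subl | apply: og_ltr_addl].
exists s; split => // i.
  move=> q hq; have [w hw] := adherent_iotaP (clos_coord_adherent hq).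
  have := Hy i; rewrite hq Hys /a /b hq /=; case: (s i) => [w'|] /= [q0 [//[<-] [h1 h2]]].
  exists w'; split => //; rewrite hw in h1 h2 *; congr iota.
  exact: iota_eq_near he (og_ltr_subl ogQ _ e0) (og_ltr_addl ogQ _ e0) h1 h2.
move=> hN; have := Hy i; rewrite hN Hys /a hN; case: (s i) => //= w h.
by apply/iota_le; apply: og_ltW h.
Qed.

End Points.

Lemma closP N (S : ('I_N -> option Z) -> Prop) x : closure_Om leQ (embed iota S) x <->
  exists z, (forall i, x i = omap iota (z i)) /\ gclosure leZ S z.
Proof.
split=> [Hc|[z [Hx Hz]] a b Hab].
  have [s0 [_ H0 _]] := clos_box Hc 0.
  exists (fun i => if x i is Some _ then s0 i else None); split.
    by move=> i; case E: (x i) => [q|] //; have [w [-> ->]] := H0 i q E.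
  move=> t; have [s [Ss Hf Hinf]] := clos_box Hc t; exists s; split => // i.
  case E: (x i) => [q|] /=; last exact: (Hinf i E).
  have [w [-> hw]] := H0 i q E; have [w' [-> hw']] := Hf i q E.
  by rewrite (iota_inj (etrans (esym hw') hw)).
have [t Ht] := iota_cofinal_seq [seq a i | i <- enum 'I_N].
have [s [Ss Hs]] := Hz t.
exists (fun i => omap iota (s i)); split; first by exists s.
move=> i; have := Hab i; have := Hs i; rewrite Hx; case: (z i) => [v|] /=.
  by move=> -> [h1 h2]; exists (iota v).
case: (s i) => [w|] //= hw _.
apply: (og_lt_le_trans ogQ (Ht (a i) _)); first by apply: map_f; rewrite mem_enum.
exact/iota_le.
Qed.

End Closure.

Lemma widen_lift m (j : 'I_m) : widen_ord (leqnSn m) j = lift ord_max j.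
Proof. by apply: val_inj => /=; rewrite /bump leqNgt ltn_ord. Qed.

Lemma widen_or_max m (i : 'I_m.+1) : i = ord_max \/ exists j, i = widen_ord (leqnSn m) j.
Proof. by case: (unliftP ord_max i) => [j ->|->]; [right; exists j; rewrite widen_lift | left]. Qed.

Lemma widen_neq_max m (j : 'I_m) : (widen_ord (leqnSn m) j == ord_max) = false.
Proof. by apply/negbTE; rewrite widen_lift eq_sym; apply: neq_lift. Qed.

Definition widen_set m (K : {set 'I_m}) : {set 'I_m.+1} :=
  [set i | if unlift ord_max i is Some j then j \in K else false].

Lemma mem_widen_set m (K : {set 'I_m}) j : (widen_ord (leqnSn m) j \in widen_set K) = (j \in K).
Proof. by rewrite inE widen_lift liftK. Qed.

Lemma max_notin_widen_set m (K : {set 'I_m}) : ord_max \notin widen_set K.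
Proof. by rewrite inE unlift_none. Qed.

Lemma supp_omap (Z Q : Type) (f : Z -> Q) N (x : 'I_N -> option Q) (z : 'I_N -> option Z) :
  (forall i, x i = omap f (z i)) -> supp x = supp z.
Proof. by move=> H; apply/setP => i; rewrite !inE H; case: (z i). Qed.

Lemma supp_restrict (T : Type) N (a : 'I_N -> option T) (I J : {set 'I_N}) :
  supp a = I -> J \subset I -> supp (restrict J a) = J.
Proof.
move=> Ha JI; apply/setP => i; rewrite !inE /restrict; case: ifP => // hi.
by have [v ->] := supp_inP Ha (subsetP JI i hi).
Qed.

Section Faces.
Variables (Z Q : zmodType) (leZ : rel Z) (one : Z) (HZ : is_Zgroup leZ one)
  (leQ : rel Q) (iota : Z -> Q) (HQ : is_divisible_hull leZ leQ iota).

Lemma FfaceP N (J : {set 'I_N}) (S : ('I_N -> option Z) -> Prop) x :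
  Fface leQ iota J S x <->
  exists z, [/\ forall i, x i = omap iota (z i), gclosure leZ S z & supp z = J].
Proof.
rewrite /Fface /clos; split.
  move=> [/(closP HZ HQ) [z [Hx Hz]] Hs]; exists z; split => //.
  by rewrite -(supp_omap Hx).
move=> [z [Hx Hz Hs]]; split; first by apply/(closP HZ HQ); exists z.
by rewrite (supp_omap Hx).
Qed.

Lemma Fface_socle m (S : ('I_m.+1 -> option Z) -> Prop) (J : {set 'I_m.+1}) x :
  Fface leQ iota J S x -> Fface leQ iota (hatJ J) (hat S) (socle x).
Proof.
move=> /FfaceP [z [Hx Hz Hs]]; apply/FfaceP; exists (socle z); split.
- by move=> i; rewrite /socle Hx.
- move=> t; have [s [Ss Hss]] := Hz t.
  by exists (socle s); split; [exists s | move=> i; apply: Hss].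
- by apply/setP => i; rewrite !inE -Hs inE.
Qed.

Lemma Fface_max_in m (S : ('I_m.+1 -> option Z) -> Prop) (J : {set 'I_m.+1}) :
  ord_max \in J ->
  set_eq (Fface leQ iota J S)
    (fun x => [/\ Fface leQ iota (hatJ J) (hat S) (socle x),
                  (exists z, x ord_max = Some (iota z)) & clos leQ iota S x]).
Proof.
move=> hmJ x; split.
  move=> hx; split; [exact: Fface_socle | | by case: hx].
  by move/FfaceP: hx => [z [Hxz _ Hs]]; rewrite Hxz; have [v ->] := supp_inP Hs hmJ; exists v.
move=> [[_ hs] [z hz] hc]; split => //.
apply/setP => i; rewrite inE; case: (widen_or_max i) => [->|[j ->]]; first by rewrite hz hmJ.
by move/setP: hs => /(_ j); rewrite !inE.
Qed.

Variables (N : nat) (I : {set 'I_N}) (A : ('I_N -> option Z) -> Prop)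
  (k : nat) (phi : 'I_k -> 'I_N -> int) (gam : 'I_k -> Z)
  (l : nat) (psi : 'I_l -> 'I_N -> int) (rho nn : 'I_l -> nat)
  (Hn : forall j, (0 < nn j)%N /\ (rho j < nn j)%N)
  (HAx : forall x, A x <-> [/\ supp x = I, (forall j, leZ (gam j) (linform I (phi j) x)) &
          (forall j, congr_mod (linform I (psi j) x) (one *+ rho j) (nn j))]).

Lemma A_supp a : A a -> supp a = I. Proof. by case/HAx. Qed.

Lemma Fface_of_recession (J : {set 'I_N}) a d : A a -> recession I phi psi nn d -> J \subset I ->
  (forall i, i \in J -> d i = 0) -> (forall i, i \in I -> i \notin J -> 1 <= d i) ->
  Fface leQ iota J A (fun i => omap iota (restrict J a i)).
Proof.
move=> Aa Gd JI H0 H1; apply/FfaceP; exists (restrict J a); split => //.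
  exact: (gclosure_restrict HZ HAx Aa Gd JI H0 H1).
exact: supp_restrict (A_supp Aa) JI.
Qed.

Lemma Fface_recession (J : {set 'I_N}) x0 : Fface leQ iota J A x0 ->
  J \subset I /\ exists d, [/\ recession I phi psi nn d, forall i, i \in J -> d i = 0
                                & forall i, i \in I :\: J -> 1 <= d i].
Proof.
move=> /FfaceP [z0 [_ Hz0 Hs0]].
have JI : J \subset I.
  apply/subsetP => i hi; have [s [Ss Hss]] := Hz0 0; rewrite -(A_supp Ss) inE.
  by have := Hss i; have [v ->] := supp_inP Hs0 hi => ->.
split=> //; apply: (recession_direction HZ Hn HAx (c := fun i => odflt 0 (z0 i))).
  by move=> i; rewrite inE => /andP [].
move=> t; have [s [Ss Hss]] := Hz0 t; exists s; split => //; split.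
  by move=> i hi; have := Hss i; have [v hv] := supp_inP Hs0 hi; rewrite hv.
move=> i; rewrite inE => /andP [hJ hI]; have := Hss i; rewrite (supp_outP Hs0 hJ).
by have [v hv] := supp_inP (A_supp Ss) hI; rewrite hv => h; exists v.
Qed.

Lemma Fface_restrict (J : {set 'I_N}) x0 a : Fface leQ iota J A x0 -> A a ->
  Fface leQ iota J A (fun i => omap iota (restrict J a i)).
Proof.
move=> /Fface_recession [JI [d [Gd H0 H1]]] Aa; apply: Fface_of_recession Aa Gd JI H0 _.
by move=> i hI hJ; apply: H1; rewrite inE hJ.
Qed.

End Faces.

Section SocleFaces.
Variables (Z Q : zmodType) (leZ : rel Z) (one : Z) (HZ : is_Zgroup leZ one)
  (leQ : rel Q) (iota : Z -> Q) (HQ : is_divisible_hull leZ leQ iota).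
Variables (m : nat) (I : {set 'I_m.+1}) (A : ('I_m.+1 -> option Z) -> Prop)
  (k : nat) (phi : 'I_k -> 'I_m.+1 -> int) (gam : 'I_k -> Z)
  (l : nat) (psi : 'I_l -> 'I_m.+1 -> int) (rho nn : 'I_l -> nat)
  (Hn : forall j, (0 < nn j)%N /\ (rho j < nn j)%N)
  (HAx : forall x, A x <-> [/\ supp x = I, (forall j, leZ (gam j) (linform I (phi j) x)) &
          (forall j, congr_mod (linform I (psi j) x) (one *+ rho j) (nn j))]).

Local Notation F J S := (Fface leQ iota J S).

Lemma Fface_socle_lift J x0 y : F J A x0 -> F (hatJ J) (hat A) y ->
  exists x, F J A x /\ forall i, y i = socle x i.
Proof.
move=> Hx0 /(FfaceP HZ HQ) [zy [Hy Hzy Hsy]].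
have [s [[a [Aa Hsa]] Hss]] := Hzy 0.
exists (fun i => omap iota (restrict J a i)).
split; first exact: (Fface_restrict HZ HQ Hn HAx Hx0 Aa).
move=> i; rewrite Hy /socle /restrict.
have -> : (widen_ord (leqnSn m) i \in J) = (i \in hatJ J) by rewrite inE.
by rewrite -Hsy inE; have := Hss i; rewrite Hsa /socle; case: (zy i) => [v ->|].
Qed.

Lemma hat_Fface J x0 : F J A x0 ->
  set_eq (hat (F J A)) (F (hatJ J) (hat A)) /\ exists y, F (hatJ J) (hat A) y.
Proof.
move=> hx0; split; last by exists (socle x0); exact: (Fface_socle HZ HQ hx0).
move=> y; split; last by move=> /(Fface_socle_lift hx0) [x [hx he]]; exists x.
move=> [x [hx hy]]; have -> : y = socle x by apply: functional_extensionality.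
exact: (Fface_socle HZ HQ hx).
Qed.

Lemma Fface_max_notin J x0 : F J A x0 -> ord_max \notin J ->
  set_eq (F J A) (fun x => F (hatJ J) (hat A) (socle x) /\ x ord_max = None).
Proof.
move=> Hx0 hmJ x; split.
  by move=> hx; split; [exact: (Fface_socle HZ HQ hx) | case: hx => _ /supp_outP; apply].
move=> [hx hxm]; have [x' [hx' he]] := Fface_socle_lift Hx0 hx.
suff -> : x = x' by [].
apply: functional_extensionality => i; case: (widen_or_max i) => [->|[j ->]]; last exact: he.
by rewrite hxm; case: hx' => _ /supp_outP ->.
Qed.

Lemma hat_gclosure_recession K zy : gclosure leZ (hat A) zy -> supp zy = K ->
  widen_set K \subset I /\
  exists d, [/\ recession I phi psi nn d, forall i, i \in widen_set K -> d i = 0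
               & forall i, i \in (I :\: widen_set K) :\ ord_max -> 1 <= d i].
Proof.
move=> Hzy Hsy; split.
  apply/subsetP => i; case: (widen_or_max i) => [->|[j ->]].
    by rewrite (negbTE (max_notin_widen_set K)).
  rewrite mem_widen_set => hj; have [s [[a [Aa Hsa]] Hss]] := Hzy 0.
  have := Hss j; rewrite Hsa /socle; have [v -> h] := supp_inP Hsy hj.
  by rewrite -(A_supp HAx Aa) inE h.
pose c i := if unlift ord_max i is Some j then odflt 0 (zy j) else 0.
apply: (recession_direction HZ Hn HAx (c := c)).
  by move=> i; rewrite in_setD1 in_setD => /andP [_ /andP []].
move=> t; have [s [[a [Aa Hsa]] Hss]] := Hzy t; exists a; split => //; split.
  move=> i; case: (widen_or_max i) => [->|[j ->]].
    by rewrite (negbTE (max_notin_widen_set K)).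
  rewrite mem_widen_set /c widen_lift liftK => hj; have := Hss j; rewrite Hsa /socle widen_lift.
  by have [v ->] := supp_inP Hsy hj.
move=> i; rewrite in_setD1 in_setD => /andP [hm /andP [hK hI]].
case: (widen_or_max i) hm hK hI => [->|[j ->]]; first by rewrite eqxx.
move=> _; rewrite mem_widen_set => hj hI; have := Hss j; rewrite Hsa /socle (supp_outP Hsy hj).
by have [v hv] := supp_inP (A_supp HAx Aa) hI; rewrite hv => h; exists v.
Qed.

(* The last coordinate is kept in J exactly when the direction does not move it;
   non-negativity rules out a negative last coordinate. *)
Lemma exists_Fface_above K y0 : nonneg leZ A -> F K (hat A) y0 ->
  exists J, hatJ J = K /\ exists x, F J A x.
Proof.
move=> Hnn /(FfaceP HZ HQ) [zy [_ Hzy Hsy]].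
have [KI [d [Gd Hd0 Hd1]]] := hat_gclosure_recession Hzy Hsy.
have [s0 [[a0 [Aa0 _]] _]] := Hzy 0.
pose b := (ord_max \in I) && (d ord_max == 0).
pose J := if b then ord_max |: widen_set K else widen_set K.
exists J; split.
  apply/setP => j; rewrite inE /J.
  by case: ifP => _; rewrite ?in_setU1 ?widen_neq_max /= mem_widen_set.
exists (fun i => omap iota (restrict J a0 i)); apply: (Fface_of_recession HZ HQ HAx Aa0 Gd).
- rewrite /J; case: ifP => hb //.
  by rewrite subUset sub1set KI; case/andP: hb => ->.
- move=> i; rewrite /J; case: ifP => hb; last exact: Hd0.
  by rewrite in_setU1 => /orP [/eqP ->|/Hd0 //]; case/andP: hb => _ /eqP.
move=> i hI hJ; case: (widen_or_max i) hI hJ => [->|[j ->]] hI hJ.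
  have : ~~ b by move: hJ; rewrite /J; case: ifP => // _; rewrite in_setU1 eqxx.
  rewrite /b hI /= => hne; rewrite -gtz0_ge1 lt_def hne.
  exact: (nonneg_recession_ge0 HZ HAx Hnn Aa0 Gd hI).
apply: Hd1; rewrite in_setD1 in_setD widen_neq_max hI andbT /=.
by move: hJ; rewrite /J; case: ifP => _ //; rewrite in_setU1 widen_neq_max.
Qed.

End SocleFaces.

Unset Implicit Arguments.

Theorem proposition3p7
  (Z : zmodType) (leZ : rel Z) (one : Z) (HZ : is_Zgroup leZ one)
  (Q : zmodType) (leQ : rel Q) (iota : Z -> Q)
  (HQ : is_divisible_hull leZ leQ iota)
  (m : nat) (I : {set 'I_m.+1}) (A : ('I_m.+1 -> option Z) -> Prop)
  (HA : basic_presburger leZ one I A) :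
  let X := hat A in
  (forall J : {set 'I_m.+1},
     (exists x, Fface leQ iota J A x) ->
     set_eq (hat (Fface leQ iota J A)) (Fface leQ iota (hatJ J) X) /\
     (exists y, Fface leQ iota (hatJ J) X y)) /\
  (nonneg leZ A ->
   forall K : {set 'I_m},
     (exists y, Fface leQ iota K X y) ->
     exists J : {set 'I_m.+1},
       [/\ (exists x, Fface leQ iota J A x),
           set_eq (hat (Fface leQ iota J A)) (Fface leQ iota K X),
           (ord_max \notin J ->
              set_eq (Fface leQ iota J A)
                (fun x => Fface leQ iota K X (socle x) /\ x ord_max = None)) &
           (ord_max \in J ->
              set_eq (Fface leQ iota J A)
                (fun x => [/\ Fface leQ iota K X (socle x),
                              (exists z, x ord_max = Some (iota z)) &
                              clos leQ iota A x]))]).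
Proof.
move: HA => [k [phi [gam [l [psi [rho [nn [Hn HAx]]]]]]]] X.
split=> [J [x0 hx0]|Hnn K [y0 hy0]]; first exact: (hat_Fface HZ HQ Hn HAx hx0).
have [J [<- [x0 hx0]]] := exists_Fface_above HZ HQ Hn HAx Hnn hy0.
exists J; split.
- by exists x0.
- exact: (hat_Fface HZ HQ Hn HAx hx0).1.
- exact: (Fface_max_notin HZ HQ Hn HAx hx0).
- exact: (Fface_max_in HZ HQ).
Qed.
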